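(* If $(A,\Delta)$ is a generalized multiplier Hopf coquasigroup with an identity, then $(A,\Delta)$ is a Hopf coquasigroup.
   Context: A generalized multiplier Hopf coquasigroup is: an associative algebra $A$ over a field $k$ with non-degenerate product, an algebra homomorphism $\Delta:A\to M(A\otimes A)$ (not necessarily coassociative) with Galois maps $T_{1}(a\otimes b)=\Delta(a)(1\otimes b)$, $T_{2}(a\otimes b)=(a\otimes 1)\Delta(b)$ in $A\otimes A$, and a linear $\varepsilon:A\to k$ with $(\varepsilon\otimes\iota)T_{1}(a\otimes b)=ab=(\iota\otimes\varepsilon)T_{2}(a\otimes b)$, such that $T_{1},T_{2}$ are bijective, $T_{1}^{-1}=(\iota\otimes\varepsilon\otimes\iota)(\iota\otimes T_{1}^{-1})(\Delta\otimes\iota)$ and $T_{2}^{-1}=(\iota\otimes\varepsilon\otimes\iota)(T_{2}^{-1}\otimes\iota)(\iota\otimes\Delta)$. The antipode $S$ is defined by $S(a)b=(\varepsilon\otimes\iota)T_{1}^{-1}(a\otimes b)$. If $A$ has an identity then $M(A)=A$, $M(A\otimes A)=A\otimes A$. A Hopf coquasigroup (in the sense of Klim–Majid) is a unital algebra $A$ with algebra maps $\Delta:A\to A\otimes A$, $\varepsilon:A\to k$ (counital, $\Delta$ not necessarily coassociative) and a linear $S:A\to A$ with $(m\otimes\iota)(S\otimes\Delta)\Delta(a)=1\otimes a=(m\otimes\iota)(\iota\otimes S\otimes\iota)(\iota\otimes\Delta)\Delta(a)$ and $(\iota\otimes m)(\Delta\otimes S)\Delta(a)=a\otimes 1=(\iota\otimes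 m)(\iota\otimes S\otimes\iota)(\Delta\otimes\iota)\Delta(a)$. *)

From HB Require Import structures.
From mathcomp Require Import all_boot all_order all_algebra.
Set Implicit Arguments. Unset Strict Implicit. Unset Printing Implicit Defensive.
Import GRing.Theory.
Local Open Scope ring_scope.

(* An element of V (x) W is represented by a finite formal sum               *)
(* sum_i v_i (x) w_i, i.e. a list of pairs.  Two representatives denote the  *)
(* same tensor iff they are identified by every k-bilinear map into every    *)
(* k-vector space (universal property of V (x) W), relation [teq].           *)

Definition tensor (V W : Type) := seq (V * W).

Definition bilinear_map (k : fieldType) (V W U : lmodType k) (b : V -> W -> U) :=
  (forall c v v' w, b (c *: v + v') w = c *: b v w + b v' w) /\
  (forall c v w w', b v (c *: w + w') = c *: b v w + b v w').

Definition teval (k : fieldType) (V W U : lmodType k) (b : V -> W -> U)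
  (s : tensor V W) : U := \sum_(x <- s) b x.1 x.2.

Definition teq (k : fieldType) (V W : lmodType k) (s t : tensor V W) : Prop :=
  forall (U : lmodType k) (b : V -> W -> U),
    bilinear_map b -> teval b s = teval b t.

Section HopfCoquasigroups.
Variables (k : fieldType) (A : algType k).

Definition tpure (a b : A) : tensor A A := [:: (a, b)].
Definition tmul (s t : tensor A A) : tensor A A :=
  [seq (x.1 * y.1, x.2 * y.2) | x <- s, y <- t].
Definition tscale (c : k) (s : tensor A A) : tensor A A :=
  [seq (c *: x.1, x.2) | x <- s].

Variables (Delta : A -> tensor A A) (eps : A -> k).

(* Galois maps T1(a(x)b) = Delta(a)(1(x)b), T2(a(x)b) = (a(x)1)Delta(b) *)
Definition T1 (s : tensor A A) : tensor A A :=
  [seq (p.1, p.2 * x.2) | x <- s, p <- Delta x.1].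
Definition T2 (s : tensor A A) : tensor A A :=
  [seq (x.1 * p.1, p.2) | x <- s, p <- Delta x.2].

Definition eps_id (s : tensor A A) : A := \sum_(x <- s) eps x.1 *: x.2.
Definition id_eps (s : tensor A A) : A := \sum_(x <- s) eps x.2 *: x.1.

(* maps involving A (x) A (x) A, represented by lists of ((a, b), c) *)
Definition Delta_id (s : tensor A A) : seq (A * A * A) :=
  [seq ((p.1, p.2), x.2) | x <- s, p <- Delta x.1].
Definition id_Delta (s : tensor A A) : seq (A * A * A) :=
  [seq ((x.1, p.1), p.2) | x <- s, p <- Delta x.2].
Definition id_tmap (T : tensor A A -> tensor A A) (s : seq (A * A * A))
  : seq (A * A * A) :=
  [seq ((x.1.1, q.1), q.2) | x <- s, q <- T (tpure x.1.2 x.2)].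
Definition tmap_id (T : tensor A A -> tensor A A) (s : seq (A * A * A))
  : seq (A * A * A) :=
  [seq ((q.1, q.2), x.2) | x <- s, q <- T (tpure x.1.1 x.1.2)].
Definition id_eps_id (s : seq (A * A * A)) : tensor A A :=
  [seq (x.1.1, eps x.1.2 *: x.2) | x <- s].

Definition tinverse (T Ti : tensor A A -> tensor A A) : Prop :=
  [/\ forall s t, teq s t -> teq (Ti s) (Ti t),
      forall s, teq (T (Ti s)) s &
      forall s, teq (Ti (T s)) s].

Definition linear_eps : Prop :=
  forall c a b, eps (c *: a + b) = c * eps a + eps b.

(* Delta is an algebra homomorphism A -> M(A (x) A) = A (x) A *)
Definition Delta_alg_hom : Prop :=
  (forall c a b, teq (Delta (c *: a + b)) (tscale c (Delta a) ++ Delta b)) /\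
  (forall a b, teq (Delta (a * b)) (tmul (Delta a) (Delta b))).

(* (A, Delta) with counit eps, where T1i, T2i are the inverses of T1, T2, *)
(* is a generalized multiplier Hopf coquasigroup (A has an identity, so   *)
(* M(A) = A, M(A (x) A) = A (x) A and the product is non-degenerate).     *)
Definition gen_mult_hopf_coquasigroup (T1i T2i : tensor A A -> tensor A A)
  : Prop :=
  [/\ Delta_alg_hom,
      linear_eps,
      (forall a b, eps_id (T1 (tpure a b)) = a * b /\
                   id_eps (T2 (tpure a b)) = a * b),
      tinverse T1 T1i /\ tinverse T2 T2i &
      (forall s, teq (T1i s) (id_eps_id (id_tmap T1i (Delta_id s)))) /\
      (forall s, teq (T2i s) (id_eps_id (tmap_id T2i (id_Delta s))))].

Definition is_antipode (T1i : tensor A A -> tensor A A) (S : A -> A) : Prop :=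
  forall a b, S a * b = eps_id (T1i (tpure a b)).

(* Hopf coquasigroup in the sense of Klim--Majid *)
Definition hopf_coquasigroup (S : A -> A) : Prop :=
  [/\ Delta_alg_hom /\ teq (Delta 1) (tpure 1 1),
      [/\ linear_eps, (forall a b, eps (a * b) = eps a * eps b) & eps 1 = 1],
      (forall a, eps_id (Delta a) = a /\ id_eps (Delta a) = a),
      (forall c a b, S (c *: a + b) = c *: S a + S b) &
      (forall a,
        [/\ (* (m (x) id)(S (x) Delta)Delta(a) = 1 (x) a *)
            teq [seq (S p.1 * q.1, q.2) | p <- Delta a, q <- Delta p.2]
                (tpure 1 a),
            (* (m (x) id)(id (x) S (x) id)(id (x) Delta)Delta(a) = 1 (x) a *)
            teq [seq (p.1 * S q.1, q.2) | p <- Delta a, q <- Delta p.2]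
                (tpure 1 a),
            (* (id (x) m)(Delta (x) S)Delta(a) = a (x) 1 *)
            teq [seq (q.1, q.2 * S p.2) | p <- Delta a, q <- Delta p.1]
                (tpure a 1) &
            (* (id (x) m)(id (x) S (x) id)(Delta (x) id)Delta(a) = a (x) 1 *)
            teq [seq (q.1, S q.2 * p.2) | p <- Delta a, q <- Delta p.1]
                (tpure a 1)])].

End HopfCoquasigroups.

From HB Require Import structures.
From mathcomp Require Import all_boot all_order all_algebra.
Set Implicit Arguments. Unset Strict Implicit. Unset Printing Implicit Defensive.
Import GRing.Theory.
Local Open Scope ring_scope.

(* The counit conditions say that (eps (x) id) T1 and (id (x) eps) T2 are the
   multiplication m of A; at b = 1 they are the counit axioms.  Substituting the
   definition of S into the formula for T1^-1 gives
     T1^-1 (a (x) b) = a_(1) (x) S(a_(2)) b,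
   and the formula for T2^-1 gives T2^-1 (a (x) b) = f(a, b_(1)) (x) b_(2) with
   f(a, b) := (id (x) eps) T2^-1 (a (x) b).  Evaluating T1 T1^-1 (b (x) 1) = b (x) 1
   under x (x) y |-> f(a, x) y identifies f(a, b) = a S(b).  The four Klim-Majid
   identities are then T1 T1^-1 = id and T1^-1 T1 = id on a (x) 1, and
   T2 T2^-1 = id and T2^-1 T2 = id on 1 (x) a.  Finally, multiplicativity of Delta
   reads Delta(a) T1(w) = T1((a (x) 1) w): with a = 1 and w = T1^-1 (1 (x) 1) it
   gives Delta(1) = 1 (x) 1, and after (eps (x) id) it gives
   (eps (x) id)(Delta(a) y) = a (eps (x) id)(y), whence eps is multiplicative. *)

Section LinearMaps.
Variable k : fieldType.

Lemma linear_for_sum (V : lmodType k) (U : zmodType) (s : GRing.Scale.law k U)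
    (f : V -> U) (I : Type) (r : seq I) (F : I -> V) :
  linear_for s f -> f (\sum_(i <- r) F i) = \sum_(i <- r) f (F i).
Proof.
by move=> lin_f; exact: (linear_sum (HB.pack f (GRing.isLinear.Build _ _ _ s f lin_f))).
Qed.

Lemma linear_comp (U V W : lmodType k) (f : V -> W) (g : U -> V) :
  linear f -> linear g -> linear (fun x => f (g x)).
Proof. by move=> lin_f lin_g c x y; rewrite lin_g lin_f. Qed.

Lemma linear_bigsum (V U : lmodType k) (I : Type) (r : seq I) (F : I -> V -> U) :
  (forall i, linear (F i)) -> linear (fun v => \sum_(i <- r) F i v).
Proof.
move=> lin_F c x y; rewrite scaler_sumr -big_split /=.
by apply: eq_bigr => i _; rewrite lin_F.
Qed.

Lemma linear_scale (V : lmodType k) (e : k) : linear (fun v : V => e *: v).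
Proof. by move=> c x y; rewrite scalerDr !scalerA mulrC. Qed.

Lemma linear_scale_by (V U : lmodType k) (f : V -> k) (u : U) :
  scalar f -> linear (fun v => f v *: u).
Proof. by move=> lin_f c x y; rewrite lin_f scalerDl scalerA. Qed.

Lemma linear_mulr (A : lalgType k) (y : A) : linear (fun x : A => x * y).
Proof. by move=> c x z; rewrite mulrDl scalerAl. Qed.

Lemma linear_mull (A : algType k) (y : A) : linear (fun x : A => y * x).
Proof. by move=> c x z; rewrite mulrDr scalerAr. Qed.

Lemma bilinear_mapP (V W U : lmodType k) (b : V -> W -> U) :
  bilinear_map b <-> (forall w, linear (b^~ w)) /\ (forall v, linear (b v)).
Proof.
split=> -[lin_l lin_r]; split.
- by move=> w c v v'; apply: lin_l.
- by move=> v c w w'; apply: lin_r.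
- by move=> c v v' w; apply: (lin_l w c v v').
- by move=> c v w w'; apply: (lin_r v c w w').
Qed.

End LinearMaps.

Section TensorEquality.
Variables (k : fieldType) (V W : lmodType k).
Implicit Types s t : tensor V W.

Lemma teq_sym s t : teq s t -> teq t s.
Proof. by move=> eq_st U b bil_b; rewrite eq_st. Qed.

Lemma teq_trans t s u : teq s t -> teq t u -> teq s u.
Proof. by move=> eq_st eq_tu U b bil_b; rewrite eq_st // eq_tu. Qed.

Lemma teval_cat (U : lmodType k) (b : V -> W -> U) s t :
  teval b (s ++ t) = teval b s + teval b t.
Proof. exact: big_cat. Qed.

Lemma teq_cat s s' t t' : teq s s' -> teq t t' -> teq (s ++ t) (s' ++ t').
Proof. by move=> eq_s eq_t U b bil_b; rewrite !teval_cat eq_s // eq_t. Qed.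

End TensorEquality.

Section TensorAlgebra.
Variables (k : fieldType) (A : algType k).
Implicit Types (s t : tensor A A) (U : lmodType k).

Lemma teval_tpure U (b : A -> A -> U) x y : teval b (tpure x y) = b x y.
Proof. exact: big_seq1. Qed.

Lemma teval_tscale U (b : A -> A -> U) c s :
  bilinear_map b -> teval b (tscale c s) = c *: teval b s.
Proof.
move=> /bilinear_mapP[lin_l _]; rewrite /teval big_map scaler_sumr.
by apply: eq_bigr => x _; rewrite (scalable_linear (lin_l _)).
Qed.

Lemma teval_tscale_cat U (b : A -> A -> U) c s t :
  bilinear_map b -> teval b (tscale c s ++ t) = c *: teval b s + teval b t.
Proof. by move=> bil_b; rewrite teval_cat teval_tscale. Qed.

Lemma teq_tscale c s t : teq s t -> teq (tscale c s) (tscale c t).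
Proof. by move=> eq_st U b bil_b; rewrite !teval_tscale // eq_st. Qed.

Lemma tpure_linearl (c : k) (x x' y : A) :
  teq (tpure (c *: x + x') y) (tscale c (tpure x y) ++ tpure x' y).
Proof.
move=> U b bil_b; rewrite teval_tscale_cat // !teval_tpure.
by rewrite ((bilinear_mapP b).1 bil_b).1.
Qed.

Lemma tpure_linearr (c : k) (x y y' : A) :
  teq (tpure x (c *: y + y')) (tscale c (tpure x y) ++ tpure x y').
Proof.
move=> U b bil_b; rewrite teval_tscale_cat // !teval_tpure.
by rewrite ((bilinear_mapP b).1 bil_b).2.
Qed.

Lemma teq_tmulr s t t' : teq t t' -> teq (tmul s t) (tmul s t').
Proof.
move=> eq_t U b /bilinear_mapP[lin_l lin_r]; rewrite /teval /tmul !big_allpairs_dep.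
rewrite exchange_big [RHS]exchange_big /=.
apply: (eq_t _ (fun u v => \sum_(x <- s) b (x.1 * u) (x.2 * v))).
apply/bilinear_mapP; split=> [w|v]; apply: linear_bigsum => x.
  exact: (linear_comp (lin_l _) (linear_mull _)).
exact: (linear_comp (lin_r _) (linear_mull _)).
Qed.

Lemma bilinear_mulr_r U (b : A -> A -> U) (y : A) :
  bilinear_map b -> bilinear_map (fun u v => b u (v * y)).
Proof.
move=> /bilinear_mapP[lin_l lin_r]; apply/bilinear_mapP.
by split=> [w|u]; [exact: lin_l | exact: (linear_comp (lin_r u) (linear_mulr _))].
Qed.

Lemma bilinear_mull_l U (b : A -> A -> U) (x : A) :
  bilinear_map b -> bilinear_map (fun u v => b (x * u) v).
Proof.
move=> /bilinear_mapP[lin_l lin_r]; apply/bilinear_mapP.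
by split=> [w|u]; [exact: (linear_comp (lin_l w) (linear_mull _)) | exact: lin_r].
Qed.

Lemma tmul1l t : teq (tmul (tpure 1 1) t) t.
Proof.
move=> U b _; rewrite /teval /tmul /tpure big_allpairs_dep big_seq1 /=.
by apply: eq_bigr => x _; rewrite !mul1r.
Qed.

Lemma tmul1r s : teq (tmul s (tpure 1 1)) s.
Proof.
move=> U b _; rewrite /teval /tmul /tpure big_allpairs_dep /=.
by apply: eq_bigr => x _; rewrite big_seq1 !mulr1.
Qed.

Lemma tinverse_linear (T Ti : tensor A A -> tensor A A) :
  (forall s t, T (s ++ t) = T s ++ T t) ->
  (forall c s, teq (T (tscale c s)) (tscale c (T s))) ->
  tinverse T Ti ->
  forall c s t, teq (Ti (tscale c s ++ t)) (tscale c (Ti s) ++ Ti t).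
Proof.
move=> T_cat T_scale [Ti_teq TTi TiT] c s t.
apply: (teq_trans (t := Ti (T (tscale c (Ti s) ++ Ti t)))); last exact: TiT.
apply: Ti_teq; rewrite T_cat; apply: teq_cat; last exact: teq_sym.
by apply: teq_trans (teq_sym (T_scale _ _)); apply/teq_tscale/teq_sym.
Qed.

Definition tmult s : A := teval *%R s.

Lemma bilinear_mul : bilinear_map ( *%R : A -> A -> A).
Proof.
by apply/bilinear_mapP; split=> y; [apply: linear_mulr | apply: linear_mull].
Qed.

Lemma teq_tmult s t : teq s t -> tmult s = tmult t.
Proof. by move/(_ _ _ bilinear_mul). Qed.

End TensorAlgebra.

Section Comultiplication.
Variables (k : fieldType) (A : algType k) (Delta : A -> tensor A A).
Hypothesis Delta_linear :
  forall c a b, teq (Delta (c *: a + b)) (tscale c (Delta a) ++ Delta b).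
Hypothesis Delta_mul : forall a b, teq (Delta (a * b)) (tmul (Delta a) (Delta b)).
Implicit Types (s t w : tensor A A) (U : lmodType k).

Lemma linear_teval_Delta U (b : A -> A -> U) :
  bilinear_map b -> linear (fun a => teval b (Delta a)).
Proof. by move=> bil_b c x y; rewrite Delta_linear // teval_tscale_cat. Qed.

Lemma teval_T1 U (b : A -> A -> U) s :
  teval b (T1 Delta s) = teval (fun u v => \sum_(p <- Delta u) b p.1 (p.2 * v)) s.
Proof. exact: big_allpairs_dep. Qed.

Lemma teval_T2 U (b : A -> A -> U) s :
  teval b (T2 Delta s) = teval (fun u v => \sum_(p <- Delta v) b (u * p.1) p.2) s.
Proof. exact: big_allpairs_dep. Qed.

Lemma bilinear_T1 U (b : A -> A -> U) : bilinear_map b ->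
  bilinear_map (fun u v => \sum_(p <- Delta u) b p.1 (p.2 * v)).
Proof.
move=> bil_b; have [_ lin_r] := (bilinear_mapP b).1 bil_b.
apply/bilinear_mapP; split=> [w|v].
  exact: (linear_teval_Delta (bilinear_mulr_r w bil_b)).
by apply: linear_bigsum => p; exact: (linear_comp (lin_r _) (linear_mull _)).
Qed.

Lemma bilinear_T2 U (b : A -> A -> U) : bilinear_map b ->
  bilinear_map (fun u v => \sum_(p <- Delta v) b (u * p.1) p.2).
Proof.
move=> bil_b; have [lin_l _] := (bilinear_mapP b).1 bil_b.
apply/bilinear_mapP; split=> [w|v].
  by apply: linear_bigsum => p; exact: (linear_comp (lin_l _) (linear_mulr _)).
exact: (linear_teval_Delta (bilinear_mull_l v bil_b)).
Qed.

Lemma teq_T1 s t : teq s t -> teq (T1 Delta s) (T1 Delta t).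
Proof. by move=> eq_st U b bil_b; rewrite !teval_T1 eq_st //; apply: bilinear_T1. Qed.

Lemma teq_T2 s t : teq s t -> teq (T2 Delta s) (T2 Delta t).
Proof. by move=> eq_st U b bil_b; rewrite !teval_T2 eq_st //; apply: bilinear_T2. Qed.

Lemma T1_cat s t : T1 Delta (s ++ t) = T1 Delta s ++ T1 Delta t.
Proof. by rewrite /T1 map_cat flatten_cat. Qed.

Lemma T2_cat s t : T2 Delta (s ++ t) = T2 Delta s ++ T2 Delta t.
Proof. by rewrite /T2 map_cat flatten_cat. Qed.

Lemma T1_tscale c s : teq (T1 Delta (tscale c s)) (tscale c (T1 Delta s)).
Proof.
move=> U b bil_b; rewrite teval_tscale // !teval_T1 /teval /tscale big_map scaler_sumr.
apply: eq_bigr => x _ /=.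
exact: (scalable_linear (linear_teval_Delta (bilinear_mulr_r x.2 bil_b))).
Qed.

Lemma T2_tscale c s : teq (T2 Delta (tscale c s)) (tscale c (T2 Delta s)).
Proof.
move=> U b bil_b; rewrite teval_tscale // !teval_T2 /teval /tscale big_map scaler_sumr.
apply: eq_bigr => x _ /=; rewrite scaler_sumr; apply: eq_bigr => p _.
by rewrite -scalerAl (scalable_linear (((bilinear_mapP b).1 bil_b).1 _)).
Qed.

Lemma tmul_Delta_T1 a w :
  teq (tmul (Delta a) (T1 Delta w)) (T1 Delta (tmul (tpure a 1) w)).
Proof.
move=> U b bil_b; rewrite teval_T1 /teval /tmul big_allpairs_dep.
under eq_bigr => p _ do rewrite /T1 big_allpairs_dep.
rewrite exchange_big /tpure big_allpairs_dep big_seq1 /=; apply: eq_bigr => x _ /=.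
have := Delta_mul a x.1 (bilinear_mulr_r x.2 bil_b).
rewrite /teval /tmul big_allpairs_dep /= => eq_D.
under [RHS]eq_bigr => r _ do rewrite mul1r.
by rewrite eq_D; apply: eq_bigr => p _; apply: eq_bigr => q _; rewrite mulrA.
Qed.

End Comultiplication.

Section Counit.
Variables (k : fieldType) (A : algType k) (eps : A -> k).
Hypothesis eps_linear : linear_eps eps.
Implicit Types s t : tensor A A.

Lemma bilinear_eps_id : bilinear_map (fun u v : A => eps u *: v).
Proof.
by apply/bilinear_mapP; split=> y; [apply: linear_scale_by | apply: linear_scale].
Qed.

Lemma bilinear_id_eps : bilinear_map (fun u v : A => eps v *: u).
Proof.
by apply/bilinear_mapP; split=> y; [apply: linear_scale | apply: linear_scale_by].
Qed.

Lemma teq_eps_id s t : teq s t -> eps_id eps s = eps_id eps t.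
Proof. by move/(_ _ _ bilinear_eps_id). Qed.

Lemma teq_id_eps s t : teq s t -> id_eps eps s = id_eps eps t.
Proof. by move/(_ _ _ bilinear_id_eps). Qed.

Lemma eps_id_tscale_cat c s t :
  eps_id eps (tscale c s ++ t) = c *: eps_id eps s + eps_id eps t.
Proof. exact: (teval_tscale_cat c s t bilinear_eps_id). Qed.

Lemma id_eps_tscale_cat c s t :
  id_eps eps (tscale c s ++ t) = c *: id_eps eps s + id_eps eps t.
Proof. exact: (teval_tscale_cat c s t bilinear_id_eps). Qed.

End Counit.

Section GeneralizedMultiplierHopfCoquasigroup.
Variables (k : fieldType) (A : algType k) (Delta : A -> tensor A A) (eps : A -> k).
Variables (T1i T2i : tensor A A -> tensor A A) (S : A -> A).
Hypothesis gmhc : gen_mult_hopf_coquasigroup Delta eps T1i T2i.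
Hypothesis antipode : is_antipode eps T1i S.
Implicit Types s t : tensor A A.

Let Delta_linear c a b : teq (Delta (c *: a + b)) (tscale c (Delta a) ++ Delta b).
Proof. by case: gmhc => -[]. Qed.
Let Delta_mul a b : teq (Delta (a * b)) (tmul (Delta a) (Delta b)).
Proof. by case: gmhc => -[]. Qed.
Let eps_linear : linear_eps eps. Proof. by case: gmhc. Qed.
Let eps_id_T1_tpure a b : eps_id eps (T1 Delta (tpure a b)) = a * b.
Proof. by case: gmhc => _ _ /(_ a b)[]. Qed.
Let id_eps_T2_tpure a b : id_eps eps (T2 Delta (tpure a b)) = a * b.
Proof. by case: gmhc => _ _ /(_ a b)[]. Qed.
Let T1iK : tinverse (T1 Delta) T1i. Proof. by case: gmhc => _ _ _ []. Qed.
Let T2iK : tinverse (T2 Delta) T2i. Proof. by case: gmhc => _ _ _ []. Qed.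
Let T1i_formula s : teq (T1i s) (id_eps_id eps (id_tmap T1i (Delta_id Delta s))).
Proof. by case: gmhc => _ _ _ _ []. Qed.
Let T2i_formula s : teq (T2i s) (id_eps_id eps (tmap_id T2i (id_Delta Delta s))).
Proof. by case: gmhc => _ _ _ _ []. Qed.

Let teq_T1i s t : teq s t -> teq (T1i s) (T1i t).
Proof. by case: T1iK => teq_Ti _ _; apply: teq_Ti. Qed.
Let teq_T2i s t : teq s t -> teq (T2i s) (T2i t).
Proof. by case: T2iK => teq_Ti _ _; apply: teq_Ti. Qed.
Let T1i_linear c s t : teq (T1i (tscale c s ++ t)) (tscale c (T1i s) ++ T1i t).
Proof. exact: tinverse_linear (T1_cat Delta) (T1_tscale Delta_linear) T1iK c s t. Qed.
Let T2i_linear c s t : teq (T2i (tscale c s ++ t)) (tscale c (T2i s) ++ T2i t).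
Proof. exact: tinverse_linear (T2_cat Delta) (T2_tscale Delta) T2iK c s t. Qed.
Let T1_T1i s : teq (T1 Delta (T1i s)) s. Proof. by case: T1iK. Qed.
Let T1i_T1 s : teq (T1i (T1 Delta s)) s. Proof. by case: T1iK. Qed.
Let T2_T2i s : teq (T2 Delta (T2i s)) s. Proof. by case: T2iK. Qed.
Let T2i_T2 s : teq (T2i (T2 Delta s)) s. Proof. by case: T2iK. Qed.

Lemma eps_id_T1 s : eps_id eps (T1 Delta s) = tmult s.
Proof.
rewrite /eps_id /T1 big_allpairs_dep; apply: eq_bigr => x _.
by rewrite -eps_id_T1_tpure /eps_id /T1 /tpure big_allpairs_dep big_seq1.
Qed.

Lemma id_eps_T2 s : id_eps eps (T2 Delta s) = tmult s.
Proof.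
rewrite /id_eps /T2 big_allpairs_dep; apply: eq_bigr => x _.
by rewrite -id_eps_T2_tpure /id_eps /T2 /tpure big_allpairs_dep big_seq1.
Qed.

Lemma eps_id_Delta a : eps_id eps (Delta a) = a.
Proof.
rewrite -[RHS]mulr1 -eps_id_T1_tpure /eps_id /T1 /tpure big_allpairs_dep big_seq1.
by apply: eq_bigr => p _; rewrite mulr1.
Qed.

Lemma id_eps_Delta a : id_eps eps (Delta a) = a.
Proof.
rewrite -[RHS]mul1r -id_eps_T2_tpure /id_eps /T2 /tpure big_allpairs_dep big_seq1.
by apply: eq_bigr => p _; rewrite mul1r.
Qed.

Lemma linear_S : linear S.
Proof.
move=> c x y; rewrite -[S _]mulr1 antipode.
rewrite (teq_eps_id eps_linear (teq_T1i (tpure_linearl c x y 1))).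
rewrite (teq_eps_id eps_linear (T1i_linear c _ _)).
by rewrite eps_id_tscale_cat // -!antipode !mulr1.
Qed.

Lemma T1iE s : teq (T1i s) [seq (p.1, S p.2 * x.2) | x <- s, p <- Delta x.1].
Proof.
apply: teq_trans (T1i_formula s) _ => U b /bilinear_mapP[_ lin_r].
rewrite /teval /id_eps_id /id_tmap /Delta_id big_map !big_allpairs_dep /=.
apply: eq_bigr => x _; apply: eq_bigr => p _.
by rewrite antipode /eps_id (linear_for_sum _ _ (lin_r _)).
Qed.

Lemma T2iE_id_eps s :
  teq (T2i s) [seq (id_eps eps (T2i (tpure x.1 p.1)), p.2) | x <- s, p <- Delta x.2].
Proof.
apply: teq_trans (T2i_formula s) _ => U b /bilinear_mapP[lin_l lin_r].
rewrite /teval /id_eps_id /tmap_id /id_Delta big_map !big_allpairs_dep /=.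
apply: eq_bigr => x _; apply: eq_bigr => p _.
rewrite /id_eps (linear_for_sum _ _ (lin_l _)); apply: eq_bigr => q _.
by rewrite (scalable_linear (lin_l _)) (scalable_linear (lin_r _)).
Qed.

Lemma Delta_S_Delta a :
  teq [seq (q.1, q.2 * S p.2) | p <- Delta a, q <- Delta p.1] (tpure a 1).
Proof.
apply: teq_trans (T1_T1i (tpure a 1)).
apply: teq_trans (teq_T1 Delta_linear (teq_sym (T1iE _))) => U b _.
rewrite teval_T1 /teval /tpure !big_allpairs_dep big_seq1 /=.
by apply: eq_bigr => p _; apply: eq_bigr => q _; rewrite mulr1.
Qed.

Lemma id_S_id_Delta_l a :
  teq [seq (q.1, S q.2 * p.2) | p <- Delta a, q <- Delta p.1] (tpure a 1).
Proof.
apply: teq_trans (T1i_T1 (tpure a 1)).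
apply: teq_trans (teq_sym (T1iE _)) => U b _.
rewrite /teval /T1 /tpure !big_allpairs_dep big_seq1 /=.
by apply: eq_bigr => p _; apply: eq_bigr => q _; rewrite mulr1.
Qed.

Lemma linear_id_eps_T2i a : linear (fun b => id_eps eps (T2i (tpure a b))).
Proof.
move=> c x y; rewrite (teq_id_eps eps_linear (teq_T2i (tpure_linearr c a x y))).
rewrite (teq_id_eps eps_linear (T2i_linear c _ _)).
exact: id_eps_tscale_cat.
Qed.

(* Both sides are m (T2^-1 (a (x) b)), as m = (id (x) eps) T2. *)
Lemma tmult_T2i a b :
  \sum_(p <- Delta b) id_eps eps (T2i (tpure a p.1)) * p.2 = eps b *: a.
Proof.
have := teq_tmult (T2iE_id_eps (tpure a b)).
rewrite -id_eps_T2 (teq_id_eps eps_linear (T2_T2i _)) /tmult /teval /tpure.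
by rewrite big_allpairs_dep /id_eps !big_seq1 /= => ->.
Qed.

Lemma id_eps_T2i a b : id_eps eps (T2i (tpure a b)) = a * S b.
Proof.
pose f x := id_eps eps (T2i (tpure a x)).
have bil : bilinear_map (fun u v => f u * v).
  apply/bilinear_mapP; split=> [w|v]; last exact: linear_mull.
  exact: (linear_comp (linear_mulr w) (linear_id_eps_T2i a)).
rewrite -/(f b); have := Delta_S_Delta b bil; rewrite teval_tpure mulr1 => <-.
rewrite /teval big_allpairs_dep /=.
under eq_bigr => p _ do
  (under eq_bigr => q _ do rewrite mulrA; rewrite -mulr_suml tmult_T2i).
rewrite -{2}(eps_id_Delta b) /eps_id (linear_for_sum _ _ linear_S) mulr_sumr.
by apply: eq_bigr => p _; rewrite (scalable_linear linear_S) -scalerAl -scalerAr.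
Qed.

Lemma T2iE s : teq (T2i s) [seq (x.1 * S p.1, p.2) | x <- s, p <- Delta x.2].
Proof.
apply: teq_trans (T2iE_id_eps s) _ => U b _.
rewrite /teval !big_allpairs_dep; apply: eq_bigr => x _.
by under eq_bigr do rewrite id_eps_T2i.
Qed.

Lemma S_Delta_Delta a :
  teq [seq (S p.1 * q.1, q.2) | p <- Delta a, q <- Delta p.2] (tpure 1 a).
Proof.
apply: teq_trans (T2_T2i (tpure 1 a)).
apply: teq_trans (teq_T2 Delta_linear (teq_sym (T2iE _))) => U b _.
rewrite teval_T2 /teval /tpure !big_allpairs_dep big_seq1 /=.
by apply: eq_bigr => p _; apply: eq_bigr => q _; rewrite mul1r.
Qed.

Lemma id_S_id_Delta_r a :
  teq [seq (p.1 * S q.1, q.2) | p <- Delta a, q <- Delta p.2] (tpure 1 a).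
Proof.
apply: teq_trans (T2i_T2 (tpure 1 a)).
apply: teq_trans (teq_sym (T2iE _)) => U b _.
rewrite /teval /T2 /tpure !big_allpairs_dep big_seq1 /=.
by apply: eq_bigr => p _; apply: eq_bigr => q _; rewrite mul1r.
Qed.

Lemma Delta1 : teq (Delta 1) (tpure 1 1).
Proof.
have T1_T1i_1 := T1_T1i (tpure 1 1).
apply: teq_trans (teq_sym (tmul1r (Delta 1))) _.
apply: teq_trans (teq_tmulr _ (teq_sym T1_T1i_1)) _.
apply: teq_trans (tmul_Delta_T1 Delta_mul _ _) _.
exact: teq_trans (teq_T1 Delta_linear (tmul1l _)) T1_T1i_1.
Qed.

Lemma eps_id_tmul_Delta a y : eps_id eps (tmul (Delta a) y) = a * eps_id eps y.
Proof.
have y_T1_T1i := teq_sym (T1_T1i y).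
rewrite (teq_eps_id eps_linear (teq_tmulr _ y_T1_T1i)).
rewrite (teq_eps_id eps_linear (tmul_Delta_T1 Delta_mul _ _)) eps_id_T1.
rewrite (teq_eps_id eps_linear y_T1_T1i) eps_id_T1.
rewrite /tmult /teval /tmul /tpure big_allpairs_dep big_seq1 mulr_sumr /=.
by apply: eq_bigr => x _; rewrite mul1r mulrA.
Qed.

Lemma epsM a b : eps (a * b) = eps a * eps b.
Proof.
have epsZ c x : eps (c *: x) = c * eps x by exact: (scalable_linear eps_linear).
have eps_sum := linear_for_sum _ _ eps_linear.
have sum_eps_Delta : \sum_(p <- Delta a) eps (p.1 * b) * eps p.2 = eps b * eps a.
  have := eps_id_tmul_Delta a (tpure b 1).
  rewrite /eps_id /tmul /tpure big_allpairs_dep !big_seq1 /=.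
  under eq_bigr => p _ do rewrite big_seq1 mulr1.
  move/(congr1 eps); rewrite eps_sum -scalerAr mulr1 epsZ => <-.
  by apply: eq_bigr => p _; rewrite epsZ.
rewrite -{1}(id_eps_Delta a) /id_eps mulr_suml eps_sum mulrC -sum_eps_Delta.
by apply: eq_bigr => p _; rewrite -scalerAl epsZ mulrC.
Qed.

Lemma eps1 : eps 1 = 1.
Proof.
have := eps_id_Delta 1.
rewrite (teq_eps_id eps_linear Delta1) /eps_id big_seq1 /= => eps1_1.
have : (eps 1 - 1) *: (1 : A) == 0 by rewrite scalerBl eps1_1 scale1r subrr.
by rewrite scaler_eq0 oner_eq0 orbF subr_eq0 => /eqP.
Qed.

End GeneralizedMultiplierHopfCoquasigroup.

Theorem theorem3p1 (k : fieldType) (A : algType k)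
  (Delta : A -> tensor A A) (eps : A -> k)
  (T1i T2i : tensor A A -> tensor A A) (S : A -> A) :
  gen_mult_hopf_coquasigroup Delta eps T1i T2i ->
  is_antipode eps T1i S ->
  hopf_coquasigroup Delta eps S.
Proof.
move=> gmhc antipode; split.
- by split; [case: gmhc | exact: (Delta1 gmhc)].
- by split; [case: gmhc | exact: (epsM gmhc) | exact: (eps1 gmhc)].
- by move=> a; split; [exact: (eps_id_Delta gmhc) | exact: (id_eps_Delta gmhc)].
- exact: (linear_S gmhc antipode).
- move=> a; split.
  + exact: (S_Delta_Delta gmhc antipode).
  + exact: (id_S_id_Delta_r gmhc antipode).
  + exact: (Delta_S_Delta gmhc antipode).
  + exact: (id_S_id_Delta_l gmhc antipode).
Qed.
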